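(* Let $\Sigma$ be an alphabet, $n\ge1$, $L\ge 1$, and $B$ a fixed integer. Let $h_1:\Sigma\to[0,2^L)$ be a random function whose values $h_1(c)$, $c\in\Sigma$, are mutually independent and uniformly distributed on $[0,2^L)$, and define $h(x_1,\dots,x_n)=\left(\sum_{i=1}^n B^{n-i}h_1(x_i)\right)\bmod 2^L$. Then: (i) if $n$ is even and $B$ is odd, $h$ is not uniform (there exist an $n$-gram $x$ and a value $y$ with $P(h(x)=y)\neq 2^{-L}$); (ii) if $B$ is even (and $n\ge1$ arbitrary), or if $B$ and $n$ are both odd, $h$ is uniform: $P(h(x)=y)=2^{-L}$ for every $n$-gram $x$ and every $y\in[0,2^L)$; (iii) if $n\ge 2$ and $|\Sigma|\ge 2$, then for every $B$ there exist distinct $n$-grams $w_1,w_2$ with $P(h(w_1)=h(w_2))>2^{-L}$; in particular $h$ is neither pairwise independent nor 2-universal.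
   Context: An $n$-gram is an element of $\Sigma^n$. A random hash function $h:\Sigma^n\to[0,2^L)$ is pairwise independent if $P(h(x_1)=y\wedge h(x_2)=z)=4^{-L}$ for all distinct $n$-grams $x_1,x_2$ and all $y,z$; it is 2-universal if $P(h(x_1)=h(x_2))\le 2^{-L}$ for all distinct $x_1,x_2$. *)

(* Probability over the uniform random function
   h1 : Sigma -> [0,2^L) is modelled by counting over the finite type
   {ffun Sigma -> 'I_(2^L)} (all such functions equally likely, which is
   exactly "values mutually independent and uniform"). *)
From HB Require Import structures.
From mathcomp Require Import all_boot all_order all_algebra.
Set Implicit Arguments. Unset Strict Implicit. Unset Printing Implicit Defensive.
Import Order.TTheory GRing.Theory Num.Theory.
Local Open Scope ring_scope.

Definition hfun (Sigma : finType) (L : nat) := {ffun Sigma -> 'I_(2 ^ L)}.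

Definition prob (Sigma : finType) (L : nat) (E : pred (hfun Sigma L)) : rat :=
  (#|E|%:R / #|{: hfun Sigma L}|%:R)%R.

(* h(x_1..x_n) = (sum_{i=1}^n B^(n-i) h1(x_i)) mod 2^L ; with 0-based i : 'I_n
   the exponent n - i becomes n - (i+1). Value is an integer in [0,2^L). *)
Definition rhash (Sigma : finType) (L n : nat) (B : int) (h1 : hfun Sigma L)
  (x : n.-tuple Sigma) : int :=
  ((\sum_(i < n) B ^+ (n - i.+1) * ((h1 (tnth x i) : nat)%:Z)) %% (2 ^ L)%:Z)%Z.

Definition pairwise_indep (Sigma : finType) (L n : nat)
  (H : hfun Sigma L -> n.-tuple Sigma -> int) : Prop :=
  forall (x1 x2 : n.-tuple Sigma), x1 != x2 -> forall (y z : 'I_(2 ^ L)),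
    prob [pred h1 : hfun Sigma L | (H h1 x1 == (y : nat)%:Z) && (H h1 x2 == (z : nat)%:Z)]
    = (((2 ^ L)%:R)^-2)%R.

Definition universal2 (Sigma : finType) (L n : nat)
  (H : hfun Sigma L -> n.-tuple Sigma -> int) : Prop :=
  forall (x1 x2 : n.-tuple Sigma), x1 != x2 ->
    (prob [pred h1 : hfun Sigma L | H h1 x1 == H h1 x2] <= ((2 ^ L)%:R)^-1)%R.

From HB Require Import structures.
From mathcomp Require Import all_boot all_order all_algebra.
Import Order.TTheory GRing.Theory Num.Theory.
Local Open Scope ring_scope.

(* Probabilities are proportions of the finite space of all h1, and the
   central tool is a uniformity criterion (prob_uniform_shift): if an integer
   statistic F of h1 can be moved by any amount d modulo 2^L through an
   injective change of h1, then all fibers of F mod 2^L have the same size,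
   so every residue has probability 2^-L.
   - (ii) Adding t to every value of h1 adds G * t to the hash sum, where
     G = sum_i B^(n-1-i).  G is odd when B is even, and has the parity of n
     when B is odd; an odd G is invertible modulo 2^L, so the criterion
     applies.
   - (i) If B is odd and n even, G is even; on a constant word the hash is
     G * h1(c) mod 2^L, hence even, and never equals 1.
   - (iii) Let w2 replace the first p letters of the constant word a^n by b,
     with p = 1 if B is even and p = 2 if B is odd.  The hash sums differ by
     D * (h1(a) - h1(b)) with D even, so the hashes collide as soon as
     h1(a) - h1(b) is 0 or 2^(L-1) modulo 2^L: two disjoint events of
     probability 2^-L each (criterion again, shifting h1 at a only).  The
     hashes of the two words also always have the same parity, which rules
     out pairwise independence. *)

Lemma fiber_card (T : finType) (m : nat) (f : T -> 'I_m) :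
  (forall y y' : 'I_m, exists2 phi : T -> T, injective phi &
      forall t, f t = y -> f (phi t) = y') ->
  forall y : 'I_m, (#|[pred t | f t == y]| * m = #|T|)%N.
Proof.
move=> fiber_inj.
have fiber_le y y' : (#|[pred t | f t == y]| <= #|[pred t | f t == y']|)%N.
  have [phi phi_inj phi_fiber] := fiber_inj y y'.
  rewrite -(card_imset _ phi_inj); apply: subset_leq_card.
  by apply/subsetP => _ /imsetP [t /eqP ft ->]; rewrite inE /= phi_fiber.
move=> y; rewrite -[#|T|]sum1_card (partition_big f xpredT) //=.
rewrite (eq_bigr (fun _ => #|[pred t | f t == y]|)) => [|j _].
  by rewrite sum_nat_const card_ord mulnC.
rewrite sum1dep_card; apply/eqP; rewrite eqn_leq.
have -> : #|[set t | f t == j]| = #|[pred t | f t == j]|.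
  by apply: eq_card => t; rewrite !inE.
by rewrite !fiber_le.
Qed.

Lemma pow2_gt0 (L : nat) : (0 < 2 ^ L)%N.
Proof. by rewrite expn_gt0. Qed.

Lemma pow2_gt1 (L : nat) : (0 < L)%N -> (1 < 2 ^ L)%N.
Proof. by move=> L_gt0; rewrite -[1%N]/(2 ^ 0)%N ltn_exp2l. Qed.

Lemma pow2z_neq0 (L : nat) : (2 ^ L)%:Z != 0.
Proof. by rewrite -lt0n pow2_gt0. Qed.

Lemma half_lt (L : nat) : (0 < L)%N -> (2 ^ L.-1 < 2 ^ L)%N.
Proof. by move=> L_gt0; rewrite ltn_exp2l // prednK. Qed.

Lemma modz_pow2_lt (L : nat) (z : int) : (`|(z %% (2 ^ L)%:Z)%Z| < 2 ^ L)%N.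
Proof.
rewrite -ltz_nat gez0_abs ?modz_ge0 ?pow2z_neq0 //.
by apply: ltz_pmod; rewrite ltz_nat pow2_gt0.
Qed.

Definition toI (L : nat) (z : int) : 'I_(2 ^ L) := Ordinal (modz_pow2_lt L z).

Lemma toI_val (L : nat) (z : int) : ((toI L z : nat)%:Z = z %% (2 ^ L)%:Z)%Z.
Proof. by rewrite /= gez0_abs ?modz_ge0 ?pow2z_neq0. Qed.

Lemma toI_eq (L : nat) (z : int) (y : 'I_(2 ^ L)) :
  (toI L z == y) = ((z %% (2 ^ L)%:Z)%Z == (y : nat)%:Z).
Proof.
apply/eqP/eqP => [<-|zy]; first by rewrite toI_val.
by apply: val_inj; rewrite /= zy absz_nat.
Qed.

Lemma modz_ord (L : nat) (y : 'I_(2 ^ L)) : ((y : nat)%:Z %% (2 ^ L)%:Z)%Z = y.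
Proof. by rewrite modz_small // ltz_nat ltn_ord. Qed.

Section Probability.
Context {Sigma : finType} {L : nat}.
Implicit Types (A E : pred (hfun Sigma L)).

Lemma card_hfun_gt0 : (0 < #|{: hfun Sigma L}|)%N.
Proof. by rewrite card_ffun card_ord expn_gt0 pow2_gt0. Qed.

Lemma prob0 E : (forall h, ~~ E h) -> prob E = 0.
Proof.
by move=> E0; rewrite /prob (eq_card0 (A := E)) ?mul0r // => h; apply/negbTE/E0.
Qed.

Lemma prob_fiber E : (#|E| * 2 ^ L = #|{: hfun Sigma L}|)%N ->
  prob E = ((2 ^ L)%:R)^-1.
Proof.
rewrite /prob => cardE.
have /andP[E_gt0 _] : (0 < #|E|)%N && (0 < 2 ^ L)%N.
  by rewrite -muln_gt0 cardE card_hfun_gt0.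
by rewrite -cardE natrM invfM mulrA divff ?mul1r // pnatr_eq0 -lt0n.
Qed.

Lemma prob_le {A E} : {subset A <= E} -> prob A <= prob E.
Proof.
move=> AE; rewrite /prob ler_pM2r ?invr_gt0 ?ltr0n ?card_hfun_gt0 // ler_nat.
by apply: subset_leq_card; apply/subsetP.
Qed.

Lemma probU A E : [disjoint A & E] -> prob [predU A & E] = prob A + prob E.
Proof.
by move=> AE; rewrite /prob -mulrDl -natrD -(cardUI A E) (eqP AE) addn0.
Qed.
End Probability.

Lemma prob_uniform_shift (Sigma : finType) (L : nat) (F : hfun Sigma L -> int) :
  (forall d : nat, exists2 phi : hfun Sigma L -> hfun Sigma L, injective phi &
     forall h, (F (phi h) = F h + d%:Z %[mod (2 ^ L)%:Z])%Z) ->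
  forall y : 'I_(2 ^ L),
    prob [pred h | (F h %% (2 ^ L)%:Z)%Z == (y : nat)%:Z] = ((2 ^ L)%:R)^-1.
Proof.
move=> translate y; apply: prob_fiber.
rewrite (eq_card (B := [pred h | toI L (F h) == y])) => [|h]; last first.
  by rewrite !inE toI_eq.
apply: fiber_card => y1 y2.
have [phi phi_inj phiF] :=
  translate `|(((y2 : nat)%:Z - (y1 : nat)%:Z) %% (2 ^ L)%:Z)%Z|%N.
exists phi => // h /eqP; rewrite toI_eq => /eqP Fy1.
apply/eqP; rewrite toI_eq phiF gez0_abs ?modz_ge0 ?pow2z_neq0 //.
by rewrite modzDmr -(modzDml (F h)) Fy1 addrC subrK modz_ord.
Qed.

Definition shift_on {Sigma : finType} {L : nat} (t : nat) (S : pred Sigma)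
  (h : hfun Sigma L) : hfun Sigma L :=
  [ffun s => if S s then toI L ((h s : nat)%:Z + t%:Z) else h s].

Lemma shift_on_inj (Sigma : finType) (L t : nat) (S : pred Sigma) :
  injective (@shift_on Sigma L t S).
Proof.
move=> h h' /ffunP eq_hh'; apply/ffunP => s; have := eq_hh' s; rewrite !ffunE.
case: (S s) => // /(congr1 (fun v : 'I_(2 ^ L) => (v : nat)%:Z)).
by rewrite !toI_val => /eqP; rewrite eqz_modDr !modz_ord => /eqP [] /val_inj.
Qed.

Lemma shift_onE (Sigma : finType) (L t : nat) (S : pred Sigma)
  (h : hfun Sigma L) (s : Sigma) :
  ((shift_on t S h s : nat)%:Z
     = (h s : nat)%:Z + (if S s then t%:Z else 0) %[mod (2 ^ L)%:Z])%Z.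
Proof. by rewrite ffunE; case: (S s); rewrite ?toI_val ?modz_mod ?addr0. Qed.

Definition hsum {Sigma : finType} {L n : nat} (B : int) (h : hfun Sigma L)
  (x : n.-tuple Sigma) : int :=
  \sum_(i < n) B ^+ (n - i.+1) * ((h (tnth x i) : nat)%:Z).

Definition gsum (B : int) (n : nat) : int := \sum_(i < n) B ^+ (n - i.+1).

Lemma rhashE (Sigma : finType) (L n : nat) (B : int) (h : hfun Sigma L)
  (x : n.-tuple Sigma) : rhash B h x = (hsum B h x %% (2 ^ L)%:Z)%Z.
Proof. by []. Qed.

Lemma sum_congr_mod (n : nat) (a b c : 'I_n -> int) (d : int) :
  (forall i, b i = c i %[mod d])%Z ->
  (\sum_(i < n) a i * b i = \sum_(i < n) a i * c i %[mod d])%Z.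
Proof.
move=> bc; elim/big_rec2: _ => // i y1 y2 _ y12.
rewrite -modzDm y12 -[in RHS]modzDm; congr ((_ + _) %% _)%Z.
by rewrite -modzMmr bc modzMmr.
Qed.

Lemma hsum_shift_all (Sigma : finType) (L n t : nat) (B : int)
  (h : hfun Sigma L) (x : n.-tuple Sigma) :
  (hsum B (shift_on t predT h) x = hsum B h x + gsum B n * t%:Z
     %[mod (2 ^ L)%:Z])%Z.
Proof.
rewrite /hsum (@sum_congr_mod n _ _ (fun i => (h (tnth x i) : nat)%:Z + t%:Z));
  last by move=> i; rewrite shift_onE.
rewrite /gsum mulr_suml -big_split; congr (_ %% _)%Z.
by apply: eq_bigr => i _; rewrite mulrDr.
Qed.

Lemma hsum_const (Sigma : finType) (L n : nat) (B : int) (h : hfun Sigma L)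
  (c : Sigma) : hsum B h [tuple of nseq n c] = gsum B n * (h c : nat)%:Z.
Proof.
by rewrite /hsum /gsum mulr_suml; apply: eq_bigr => i _; rewrite tnth_nseq.
Qed.

Lemma gsumS (B : int) (n : nat) : gsum B n.+1 = B * gsum B n + 1.
Proof.
rewrite /gsum big_ord_recr /= subnn expr0 mulr_sumr; congr (_ + _).
by apply: eq_bigr => i _ /=; rewrite -exprS subSS subnSK.
Qed.

Lemma dvd2_succ (x : int) : ((2 %| x + 1) = ~~ (2 %| x))%Z.
Proof.
have char2 := pchar_Fp (isT : prime 2).
rewrite !(dvdz_pcharf char2) intrD.
by move: (x%:~R) => v; case: v => [[|[|]]] //= ?.
Qed.

Lemma dvd2_mod_pow2 (L : nat) (x : int) : (0 < L)%N ->
  ((2 %| x %% (2 ^ L)%:Z) = (2 %| x))%Z.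
Proof.
case: L => // L _; have two_dvd_m : (2 %| (2 ^ L.+1)%:Z)%Z.
  by rewrite dvdzE /= expnS dvdn_mulr.
rewrite [in RHS](divz_eq x (2 ^ L.+1)%:Z).
by rewrite [in RHS]rpredDl // dvdz_mull.
Qed.

Lemma gsum_odd_of_even (B : int) (n : nat) : (2 %| B)%Z -> (0 < n)%N ->
  ~~ (2 %| gsum B n)%Z.
Proof.
by move=> B_even; case: n => // n _; rewrite gsumS dvd2_succ negbK dvdz_mulr.
Qed.

Lemma gsum_dvd2_of_odd (B : int) (n : nat) : ~~ (2 %| B)%Z ->
  (2 %| gsum B n)%Z = ~~ odd n.
Proof.
move=> B_odd; have cop : coprimez 2 B.
  by rewrite coprimezE /= coprime2n; move: B_odd; rewrite dvdzE dvdn2 negbK.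
elim: n => [|n IH]; first by rewrite /gsum big_ord0 dvdz0.
by rewrite gsumS dvd2_succ mulrC (Gauss_dvdzl _ cop) IH /= negbK.
Qed.

Lemma odd_invertible_mod_pow2 (L : nat) (G : int) : ~~ (2 %| G)%Z ->
  exists u : int, (u * G = 1 %[mod (2 ^ L)%:Z])%Z.
Proof.
case: L => [|L] G_odd; first by exists 0; rewrite expn0 !modz1.
have [u [v uv]] := Bezoutz G (2 ^ L.+1)%:Z.
have cop : coprimez G (2 ^ L.+1)%:Z.
  rewrite -natz natrX coprimez_pexpr // coprimezE /= coprimen2.
  by move: G_odd; rewrite dvdzE dvdn2 negbK.
by exists u; rewrite -(modzMDl v) addrC uv (eqP cop).
Qed.

(* Part (ii): when G is odd, every residue is hit with probability 2^-L,
   because shifting all values of h1 by u * d (u an inverse of G) moves the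
   hash by d. *)
Lemma rhash_uniform (Sigma : finType) (n L : nat) (B : int)
  (x : n.-tuple Sigma) (y : 'I_(2 ^ L)) : ~~ (2 %| gsum B n)%Z ->
  prob [pred h1 : hfun Sigma L | rhash B h1 x == (y : nat)%:Z]
    = ((2 ^ L)%:R)^-1.
Proof.
move=> G_odd; have [u uG] := odd_invertible_mod_pow2 L _ G_odd.
apply: (@prob_uniform_shift _ _ (fun h => hsum B h x)) => d.
exists (shift_on `|((u * d%:Z)%R %% (2 ^ L)%:Z)%Z|%N predT) => [|h].
  exact: shift_on_inj.
rewrite hsum_shift_all gez0_abs ?modz_ge0 ?pow2z_neq0 //.
rewrite -modzDmr modzMmr modzDmr mulrA [gsum B n * u]mulrC.
by rewrite -modzDmr -modzMml uG modzMml mul1r modzDmr.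
Qed.

(* Part (i): on a constant word the hash sum is G * h1(c); if G is even and
   L > 0 the hash is even, so the value 1 is never taken. *)
Lemma rhash_const_neq1 (Sigma : finType) (n L : nat) (B : int) (c : Sigma) :
  (0 < L)%N -> (2 %| gsum B n)%Z ->
  prob [pred h1 : hfun Sigma L | rhash B h1 [tuple of nseq n c] == 1] = 0.
Proof.
move=> L_gt0 G_even; apply: prob0 => h; apply/negP => /eqP hash1.
have : (2 %| rhash B h [tuple of nseq n c])%Z.
  by rewrite rhashE dvd2_mod_pow2 // hsum_const dvdz_mulr.
by rewrite hash1.
Qed.

Definition prefix_word {Sigma : finType} (n p : nat) (a b : Sigma) :
  n.-tuple Sigma :=
  [tuple if (i < p)%N then b else a | i < n].

Definition wprefix (B : int) (n p : nat) : int :=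
  \sum_(i < n | (i < p)%N) B ^+ (n - i.+1).

Lemma hsum_prefix_word {Sigma : finType} {L n : nat} (p : nat) (B : int)
  (h : hfun Sigma L) (a b : Sigma) :
  hsum B h [tuple of nseq n a]
    = hsum B h (prefix_word n p a b)
      + wprefix B n p * ((h a : nat)%:Z - (h b : nat)%:Z).
Proof.
have diff : hsum B h [tuple of nseq n a] - hsum B h (prefix_word n p a b)
    = wprefix B n p * ((h a : nat)%:Z - (h b : nat)%:Z).
  rewrite /hsum /wprefix -sumrB mulr_suml [RHS]big_mkcond; apply: eq_bigr => i _.
  by rewrite tnth_nseq tnth_mktuple; case: ifP; rewrite ?mulrBr ?subrr ?mul0r.
by rewrite -diff addrC subrK.
Qed.

(* For n >= 2, the first position (B even) or the first two positions
   (B odd) have even total weight: B^(n-1), resp. B^(n-2) * (B + 1). *)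
Lemma wprefix_even (B : int) (k : nat) :
  (2 %| wprefix B k.+2 (if (2 %| B)%Z then 1%N else 2%N))%Z.
Proof.
rewrite /wprefix big_mkcond !big_ord_recl big1 => [|i _]; last first.
  by case: (2 %| B)%Z.
case: (boolP (2 %| B)%Z) => B_parity; rewrite /bump /= !subSS !subn0 !addr0.
  by rewrite exprS dvdz_mulr.
by rewrite exprS -[X in _ + X]mul1r -mulrDl; apply: dvdz_mulr; rewrite dvd2_succ.
Qed.

Lemma even_mul_half_mod (L : nat) (D z : int) : (0 < L)%N -> (2 %| D)%Z ->
  (z %% (2 ^ L)%:Z = 0 \/ z %% (2 ^ L)%:Z = (2 ^ L.-1)%:Z)%Z ->
  ((D * z) %% (2 ^ L)%:Z = 0)%Z.
Proof.
move=> L_gt0 /dvdzP [D' ->] z_mod.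
rewrite (divz_eq z (2 ^ L)%:Z) mulrDr mulrA modzMDl.
case: z_mod => ->; first by rewrite mulr0 mod0z.
by rewrite -mulrA -PoszM -expnS prednK // modzMl.
Qed.

(* For distinct letters a, b the difference h1(a) - h1(b) is uniform modulo
   2^L: shifting h1 at a alone translates it. *)
Lemma diff_uniform (Sigma : finType) (L : nat) (a b : Sigma) (y : 'I_(2 ^ L)) :
  a != b ->
  prob [pred h : hfun Sigma L |
          (((h a : nat)%:Z - (h b : nat)%:Z) %% (2 ^ L)%:Z)%Z == (y : nat)%:Z]
    = ((2 ^ L)%:R)^-1.
Proof.
move=> ab.
apply: (@prob_uniform_shift _ _ (fun h => (h a : nat)%:Z - (h b : nat)%:Z)) => d.
exists (shift_on d (pred1 a)) => [|h]; first exact: shift_on_inj.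
have -> : shift_on d (pred1 a) h b = h b by rewrite ffunE /= eq_sym (negbTE ab).
rewrite -(modzDml (shift_on _ _ _ _ : nat)%:Z) shift_onE /= eqxx.
by rewrite modzDml addrAC.
Qed.

(* If the prefix weight is even, the constant word a^n and the word
   b^p a^(n-p) collide whenever h1(a) - h1(b) is 0 or 2^(L-1) modulo 2^L,
   two disjoint events of probability 2^-L each. *)
Lemma collision_prob {Sigma : finType} {L n p : nat} {B : int} {a b : Sigma} :
  (0 < L)%N -> a != b -> (2 %| wprefix B n p)%Z ->
  ((2 ^ L)%:R)^-1 < prob [pred h1 : hfun Sigma L |
     rhash B h1 [tuple of nseq n a] == rhash B h1 (prefix_word n p a b)].
Proof.
move=> L_gt0 ab D_even.
pose diff_is (y : 'I_(2 ^ L)) := [pred h : hfun Sigma L |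
  (((h a : nat)%:Z - (h b : nat)%:Z) %% (2 ^ L)%:Z)%Z == (y : nat)%:Z].
pose zero : 'I_(2 ^ L) := Ordinal (pow2_gt0 L).
pose half : 'I_(2 ^ L) := Ordinal (half_lt L L_gt0).
have collide : {subset [predU diff_is zero & diff_is half] <=
    [pred h1 : hfun Sigma L |
       rhash B h1 [tuple of nseq n a] == rhash B h1 (prefix_word n p a b)]}.
  move=> h /orP diff_h.
  rewrite inE /= !rhashE (hsum_prefix_word p _ _ _ b) -modzDm.
  rewrite even_mul_half_mod ?addr0 ?modz_mod //.
  by case: diff_h; rewrite inE => /eqP; [left|right].
have disjoint : [disjoint diff_is zero & diff_is half].
  apply/pred0P => h /=; apply/negP; rewrite !inE.
  by move=> /andP [/eqP -> /eqP [] /esym /eqP]; rewrite expn_eq0.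
apply: (lt_le_trans _ (prob_le collide)).
by rewrite probU // !diff_uniform // ltrDl invr_gt0 ltr0n pow2_gt0.
Qed.

Lemma prefix_word_neq {Sigma : finType} (k : nat) {p : nat} {a b : Sigma} :
  (0 < p)%N -> a != b -> [tuple of nseq k.+1 a] != prefix_word k.+1 p a b.
Proof.
move=> p_gt0 ab; apply/eqP => /(congr1 (fun w => tnth w ord0)).
by rewrite tnth_nseq tnth_mktuple p_gt0 => ba; rewrite ba eqxx in ab.
Qed.

Lemma rhash_prefix_word_parity {Sigma : finType} {L n p : nat} {B : int}
  (h : hfun Sigma L) (a b : Sigma) : (0 < L)%N -> (2 %| wprefix B n p)%Z ->
  (2 %| rhash B h [tuple of nseq n a])%Z
    = (2 %| rhash B h (prefix_word n p a b))%Z.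
Proof.
move=> L_gt0 D_even; rewrite !rhashE !dvd2_mod_pow2 //.
by rewrite (hsum_prefix_word p _ _ _ b) rpredDr ?dvdz_mulr.
Qed.

(* Hence the pair of hash values (0, 1) is never taken on these two words,
   and the hash is not pairwise independent. *)
Lemma prefix_words_not_pairwise_indep {Sigma : finType} {L k p : nat} {B : int}
  {a b : Sigma} :
  (0 < L)%N -> (0 < p)%N -> a != b -> (2 %| wprefix B k.+1 p)%Z ->
  ~ pairwise_indep
      (fun (h1 : hfun Sigma L) (x : k.+1.-tuple Sigma) => rhash B h1 x).
Proof.
move=> L_gt0 p_gt0 ab D_even indep.
have := indep _ _ (prefix_word_neq k p_gt0 ab)
  (Ordinal (pow2_gt0 L)) (Ordinal (pow2_gt1 L L_gt0)).
rewrite prob0 => [|h].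
  by move/eqP; rewrite eq_sym invr_eq0 expf_eq0 pnatr_eq0 expn_eq0.
apply/negP => /andP [/eqP hash0 /eqP hash1].
by have := rhash_prefix_word_parity h a b L_gt0 D_even; rewrite hash0 hash1.
Qed.

Lemma not_universal2_of_collision (Sigma : finType) (L n : nat)
  (H : hfun Sigma L -> n.-tuple Sigma -> int) (w1 w2 : n.-tuple Sigma) :
  w1 != w2 -> ((2 ^ L)%:R)^-1 < prob [pred h1 | H h1 w1 == H h1 w2] ->
  ~ universal2 H.
Proof.
by move=> w12 collision univ; move: (univ _ _ w12); rewrite leNgt collision.
Qed.

Theorem mainTheorem3 (Sigma : finType) (n L : nat) (B : int)
  (hSigma : (0 < #|Sigma|)%N) (hn : (1 <= n)%N) (hL : (1 <= L)%N) :
  (* (i) n even, B odd: h is not uniform *)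
  (~~ odd n -> ~~ (2 %| B)%Z ->
     exists (x : n.-tuple Sigma) (y : 'I_(2 ^ L)),
       prob [pred h1 : hfun Sigma L | rhash B h1 x == (y : nat)%:Z]
         != (((2 ^ L)%:R)^-1)%R)
  /\
  (* (ii) B even, or B and n both odd: h is uniform *)
  ((2 %| B)%Z || (~~ (2 %| B)%Z && odd n) ->
     forall (x : n.-tuple Sigma) (y : 'I_(2 ^ L)),
       prob [pred h1 : hfun Sigma L | rhash B h1 x == (y : nat)%:Z]
         = (((2 ^ L)%:R)^-1)%R)
  /\
  (* (iii) n >= 2, |Sigma| >= 2: a pair with collision probability > 2^-L *)
  ((2 <= n)%N -> (2 <= #|Sigma|)%N ->
     (exists (w1 w2 : n.-tuple Sigma), w1 != w2 /\
        (((2 ^ L)%:R)^-1 <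
           prob [pred h1 : hfun Sigma L | rhash B h1 w1 == rhash B h1 w2])%R)
     /\ ~ pairwise_indep (fun (h1 : hfun Sigma L) (x : n.-tuple Sigma) => rhash B h1 x)
     /\ ~ universal2 (fun (h1 : hfun Sigma L) (x : n.-tuple Sigma) => rhash B h1 x)).
Proof.
split; [|split].
- move=> n_even B_odd; have [c _] := card_gt0P hSigma.
  exists [tuple of nseq n c], (Ordinal (pow2_gt1 L hL)).
  rewrite rhash_const_neq1 ?gsum_dvd2_of_odd //.
  by rewrite eq_sym invr_eq0 pnatr_eq0 -lt0n pow2_gt0.
- case/orP => [B_even | /andP [B_odd n_odd]] x y; apply: rhash_uniform.
    exact: gsum_odd_of_even.
  by rewrite gsum_dvd2_of_odd // n_odd.
case: n hn => [|[|k]] // _ _ /card_gt1P [a [b [_ _ ab]]].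
pose p := if (2 %| B)%Z then 1%N else 2%N.
have p_gt0 : (0 < p)%N by rewrite /p; case: ifP.
have D_even : (2 %| wprefix B k.+2 p)%Z := wprefix_even B k.
have collide := collision_prob hL ab D_even.
have w12 := prefix_word_neq k.+1 p_gt0 ab.
split; first by exists [tuple of nseq k.+2 a], (prefix_word k.+2 p a b).
split; first exact: prefix_words_not_pairwise_indep hL p_gt0 ab D_even.
exact: not_universal2_of_collision w12 collide.
Qed.
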